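(* For integer $n\ge1$ and real $1\le x\le n$ define $$A_0(n,x)=n^2\left[\left(\tfrac32-\gamma\right)+\left(H_{\lfloor n/x\rfloor}-\log\frac nx\right)+\frac12\frac{x^2}{n^2}\left\lfloor\frac nx\right\rfloor^2+\frac12\frac{x^2}{n^2}\left\lfloor\frac nx\right\rfloor-2\frac xn\left\lfloor\frac nx\right\rfloor\right]$$ and $$B_0(n,x)=n^2\left[(1-\gamma)+\left(H_{\lfloor n/x\rfloor}-\log\frac nx\right)-\left\lfloor\frac nx\right\rfloor\frac xn\right].$$ Then, uniformly for $n\ge1$ and $1\le x\le n$: (1) $A_0(n,x)=nx+O(x^2)$; (2) $B_0(n,x)=\frac12 nx+O(x^2)$.
   Context: $H_m=\sum_{k=1}^m\frac1k$ and $\gamma$ is Euler's constant. *)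

From Stdlib Require Import Reals.
From Coquelicot Require Import Coquelicot.
Open Scope R_scope.

Fixpoint harm (m : nat) : R :=
  match m with
  | O => 0
  | S k => harm k + / INR (S k)
  end.

Definition euler_gamma : R := real (Lim_seq (fun m => harm m - ln (INR m))).

(* floor of a real, as an integer; Int_part r = up r - 1 is the floor *)
Definition floorZ (r : R) : Z := Int_part r.

(* floor(n/x) as a natural number (n/x >= 1 in the range of interest) *)
Definition q (n : nat) (x : R) : nat := Z.to_nat (floorZ (INR n / x)).

Definition A0 (n : nat) (x : R) : R :=
  let N := INR n in let Q := INR (q n x) in
  N ^ 2 * ((3/2 - euler_gamma) + (harm (q n x) - ln (N / x))
           + 1/2 * (x ^ 2 / N ^ 2) * Q ^ 2 + 1/2 * (x ^ 2 / N ^ 2) * Q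
           - 2 * (x / N) * Q).

Definition B0 (n : nat) (x : R) : R :=
  let N := INR n in let Q := INR (q n x) in
  N ^ 2 * ((1 - euler_gamma) + (harm (q n x) - ln (N / x)) - Q * (x / N)).

(* Write n/x = Q + t with Q = floor(n/x) >= 1 and 0 <= t < 1.  The estimate
   H_Q = ln Q + gamma + 1/(2Q) + O(1/Q^2) and ln(1 + t/Q) = t/Q + O(1/Q^2) make
   H_Q - ln(n/x) an explicit rational function of Q and t up to O(1/Q^2); since
   n^2 = (Q+t)^2 x^2 <= 4 Q^2 x^2, that error costs O(x^2), and the explicit part
   of A0 (resp. B0) is n x (resp. n x / 2) plus x^2 times a bounded polynomial in
   t and 1/Q.  The estimate for H_Q holds because H_m - ln m - 1/(2m) increases
   with increments at most 1/m^2 - 1/(m+1)^2, so its limit, gamma, lies between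
   each term and that term plus 1/m^2. *)

From Stdlib Require Import Reals Lra Lia Psatz ZArith.
From Coquelicot Require Import Coquelicot.
Open Scope R_scope.

Lemma Rinv_pos_le_1 y : 1 <= y -> 0 < / y <= 1.
Proof.
  intros Hy.
  split; [apply Rinv_0_lt_compat | rewrite <- Rinv_1; apply Rinv_le_contravar]; lra.
Qed.

Lemma MVT_bounds_from_0 (f f' : R -> R) (t K : R) : 0 <= t -> f 0 = 0 ->
  (forall u, 0 <= u <= t -> is_derive f u (f' u)) ->
  (forall u, 0 < u < t -> - K <= f' u <= 0) ->
  - K * t <= f t <= 0.
Proof.
  intros Ht Hf0 Hdf Hf'.
  destruct (Req_dec t 0) as [->|Ht0]; [rewrite Hf0; lra|].
  destruct (MVT_cor2 f f' 0 t) as (c & Hc & Hct); [lra| |].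
  - intros c Hc. apply is_derive_Reals, Hdf, Hc.
  - rewrite Hf0, !Rminus_0_r in Hc. rewrite Hc.
    specialize (Hf' c Hct). nra.
Qed.

Lemma ln_1p_sub_bounds s : 0 <= s -> - s ^ 2 <= ln (1 + s) - s <= 0.
Proof.
  intros Hs.
  replace (- s ^ 2) with (- s * s) by ring.
  apply (MVT_bounds_from_0 (fun u => ln (1 + u) - u) (fun u => - u / (1 + u)));
    [exact Hs | | |].
  - cbv beta. now rewrite Rplus_0_r, ln_1, Rminus_0_r.
  - intros u Hu. auto_derive; [lra | field; lra].
  - intros u Hu. unfold Rdiv.
    pose proof (Rinv_pos_le_1 (1 + u) ltac:(lra)). nra.
Qed.

Lemma ln_1p_pade_bounds t : 0 <= t ->
  - t ^ 3 / 2 <= ln (1 + t) - t * (2 + t) / (2 * (1 + t)) <= 0.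
Proof.
  intros Ht.
  replace (- t ^ 3 / 2) with (- (t ^ 2 / 2) * t) by field.
  apply (MVT_bounds_from_0 (fun u => ln (1 + u) - u * (2 + u) / (2 * (1 + u)))
           (fun u => - u ^ 2 / (2 * (1 + u) ^ 2))); [exact Ht | | |].
  - cbv beta. rewrite Rplus_0_r, ln_1. field.
  - intros u Hu. auto_derive; [lra | field; lra].
  - intros u Hu. unfold Rdiv.
    pose proof (Rinv_pos_le_1 ((1 + u) ^ 2) ltac:(nra)).
    rewrite Rinv_mult. nra.
Qed.

Lemma inv_cube_le_inv_sq_diff M : 1 <= M -> / M ^ 3 / 2 <= / M ^ 2 - / (M + 1) ^ 2.
Proof.
  intros HM.
  replace (/ M ^ 3 / 2) with (/ (2 * M ^ 3)) by (field; lra).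
  replace (/ M ^ 2 - / (M + 1) ^ 2) with (/ (M ^ 2 * (M + 1) ^ 2 / (2 * M + 1)))
    by (field; lra).
  apply Rinv_le_contravar; [apply Rdiv_lt_0_compat; nra |].
  apply Rle_div_l; [lra |].
  assert ((M + 1) ^ 2 <= 2 * M * (2 * M + 1)) by nra.
  replace (2 * M ^ 3 * (2 * M + 1)) with (M ^ 2 * (2 * M * (2 * M + 1))) by ring.
  apply Rmult_le_compat_l; nra.
Qed.

Definition harm_ln_corr (m : nat) : R := harm m - ln (INR m) - / (2 * INR m).

Lemma harm_ln_corr_step m : (1 <= m)%nat ->
  0 <= harm_ln_corr (S m) - harm_ln_corr m <= / INR m ^ 2 - / INR (S m) ^ 2.
Proof.
  intros Hm.
  assert (HM : 1 <= INR m) by (apply (le_INR 1); lia).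
  rewrite S_INR. set (M := INR m) in *.
  assert (Hln : ln (M + 1) = ln M + ln (1 + / M)).
  { rewrite <- ln_mult by (try apply Rplus_lt_0_compat, Rinv_0_lt_compat; lra).
    f_equal. field. lra. }
  assert (Hincr : harm_ln_corr (S m) - harm_ln_corr m
                  = - (ln (1 + / M) - / M * (2 + / M) / (2 * (1 + / M)))).
  { unfold harm_ln_corr. cbn [harm]. rewrite S_INR. fold M. rewrite Hln.
    field. lra. }
  assert (Ht : 0 < / M) by (apply Rinv_0_lt_compat; lra).
  pose proof (ln_1p_pade_bounds (/ M) (Rlt_le _ _ Ht)) as Hpade.
  pose proof (inv_cube_le_inv_sq_diff M HM).
  rewrite pow_inv in Hpade. rewrite Hincr. lra.
Qed.

Lemma is_lim_seq_adjacent_bounds (u w : nat -> R) :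
  (forall n, u n <= u (S n)) ->
  (forall n, u (S n) + w (S n) <= u n + w n) ->
  is_lim_seq w 0 ->
  exists l : R, is_lim_seq u l /\ forall n, u n <= l <= u n + w n.
Proof.
  intros Hu Huw Hw.
  destruct (ex_lim_seq_adj u (fun n => u n + w n) Hu Huw) as [[l Hl] _].
  { apply is_lim_seq_ext with w; [intros n; ring | exact Hw]. }
  assert (Hlw : is_lim_seq (fun n => u n + w n) l).
  { rewrite <- (Rplus_0_r l). apply is_lim_seq_plus'; assumption. }
  exists l. split; [exact Hl |]. intros n. split.
  - exact (is_lim_seq_incr_compare u l Hl Hu n).
  - exact (is_lim_seq_decr_compare _ l Hlw Huw n).
Qed.

Lemma is_lim_seq_inv_INR_S : is_lim_seq (fun k => / INR (S k)) 0.
Proof.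
  apply (is_lim_seq_incr_1 (fun n => / INR n)).
  replace (Finite 0) with (Rbar_inv p_infty) by reflexivity.
  apply is_lim_seq_inv; [apply is_lim_seq_INR | discriminate].
Qed.

Lemma harm_sub_ln_asymptotic m : (1 <= m)%nat ->
  Rabs (harm m - ln (INR m) - euler_gamma - / (2 * INR m)) <= / INR m ^ 2.
Proof.
  intros Hm.
  destruct (is_lim_seq_adjacent_bounds (fun k => harm_ln_corr (S k))
              (fun k => / INR (S k) ^ 2)) as (l & Hl & Hbounds).
  - intros k. pose proof (harm_ln_corr_step (S k) ltac:(lia)). lra.
  - intros k. pose proof (harm_ln_corr_step (S k) ltac:(lia)). lra.
  - apply is_lim_seq_ext with (fun k => / INR (S k) * / INR (S k)).
    { intros k. rewrite <- pow_inv. ring. }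
    rewrite <- (Rmult_0_r 0).
    apply is_lim_seq_mult'; apply is_lim_seq_inv_INR_S.
  - assert (Hgamma : euler_gamma = l).
    { assert (Hlim : is_lim_seq (fun m => harm m - ln (INR m)) l).
      { apply is_lim_seq_incr_1.
        apply is_lim_seq_ext with (fun k => harm_ln_corr (S k) + / 2 * / INR (S k)).
        { intros k. unfold harm_ln_corr. rewrite Rinv_mult. ring. }
        rewrite <- (Rplus_0_r l), <- (Rmult_0_r (/ 2)).
        apply is_lim_seq_plus'; [exact Hl |].
        apply is_lim_seq_mult'; [apply is_lim_seq_const | apply is_lim_seq_inv_INR_S]. }
      unfold euler_gamma. now rewrite (is_lim_seq_unique _ _ Hlim). }
    destruct m as [|k]; [lia |].
    specialize (Hbounds k). unfold harm_ln_corr in Hbounds.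
    rewrite Hgamma. apply Rabs_le. lra.
Qed.

Lemma q_bounds n x : 0 < x <= INR n ->
  (1 <= q n x)%nat /\ INR (q n x) <= INR n / x < INR (q n x) + 1.
Proof.
  intros Hx.
  assert (Hr : 1 <= INR n / x) by (apply Rle_div_r; lra).
  destruct (base_Int_part (INR n / x)) as [Hfloor_le Hfloor_gt].
  unfold q, floorZ.
  assert (Hpos : (0 < Int_part (INR n / x))%Z) by (apply lt_IZR; lra).
  set (k := Int_part (INR n / x)) in *.
  rewrite (INR_IZR_INZ (Z.to_nat k)), Z2Nat.id by lia.
  split; [lia | lra].
Qed.

Definition harm_ln_defect (Q : nat) (r : R) : R :=
  harm Q - ln r - euler_gamma - / (2 * INR Q) + (r - INR Q) / INR Q.

Lemma harm_ln_defect_bound Q r : (1 <= Q)%nat -> INR Q <= r < INR Q + 1 ->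
  Rabs (r ^ 2 * harm_ln_defect Q r) <= 8.
Proof.
  intros HQ Hr.
  pose proof (harm_sub_ln_asymptotic Q HQ) as Hharm.
  assert (HM : 1 <= INR Q) by (apply (le_INR 1); exact HQ).
  set (M := INR Q) in *.
  set (a := r / M). set (s := (r - M) / M).
  assert (Ha : 1 <= a < 2).
  { unfold a. split; [apply Rle_div_r | apply Rlt_div_l]; lra. }
  assert (Hs : 0 <= s) by (apply Rdiv_le_0_compat; lra).
  assert (Hln : ln r = ln M + ln (1 + s)).
  { rewrite <- ln_mult by lra. f_equal. unfold s. field. lra. }
  assert (Hdef : harm_ln_defect Q r
                 = (harm Q - ln M - euler_gamma - / (2 * M)) - (ln (1 + s) - s)).
  { unfold harm_ln_defect. fold M s. rewrite Hln. ring. }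
  apply Rabs_le_between in Hharm.
  pose proof (ln_1p_sub_bounds s Hs) as Hln1p.
  assert (Hr2M : r ^ 2 * / M ^ 2 = a ^ 2) by (unfold a; field; lra).
  assert (Hr2s : r ^ 2 * s ^ 2 = (a * (r - M)) ^ 2) by (unfold a, s; field; lra).
  rewrite Hdef. apply Rabs_le_between.
  set (e := harm Q - ln M - euler_gamma - / (2 * M)) in *.
  set (L := ln (1 + s) - s) in *.
  assert (0 <= r ^ 2) by nra.
  assert (0 <= a * (r - M) < 2) by (split; nra).
  assert ((a * (r - M)) ^ 2 <= 4) by nra.
  split; nra.
Qed.

Lemma Rabs_sq_mul_add_le x a b Ka Kb : Rabs a <= Ka -> Rabs b <= Kb ->
  Rabs (x ^ 2 * (a + b)) <= (Ka + Kb) * x ^ 2.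
Proof.
  intros Ha Hb.
  rewrite Rabs_mult, Rabs_pos_eq, Rmult_comm by nra.
  apply Rmult_le_compat_r; [nra |].
  eapply Rle_trans; [apply Rabs_triang | lra].
Qed.

Lemma A0_sub_bound n x : (1 <= n)%nat -> 1 <= x <= INR n ->
  Rabs (A0 n x - INR n * x) <= 9 * x ^ 2.
Proof.
  intros Hn Hx.
  destruct (q_bounds n x ltac:(lra)) as [Hq Hr].
  pose proof (harm_ln_defect_bound _ _ Hq Hr) as Hdefect.
  assert (HQ : 1 <= INR (q n x)) by (apply (le_INR 1); exact Hq).
  set (r := INR n / x) in *. set (Q := INR (q n x)) in *.
  assert (HN : INR n = r * x) by (unfold r; field; lra).
  set (t := r - Q).
  assert (E : A0 n x - INR n * x
              = x ^ 2 * (r ^ 2 * harm_ln_defect (q n x) r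
                         + (t ^ 2 * (/ Q - 1) - 2 * t ^ 3 / Q) / 2)).
  { unfold A0, harm_ln_defect. cbv zeta. fold r Q. rewrite HN. unfold t. field. lra. }
  rewrite E. replace 9 with (8 + 1) by ring.
  apply Rabs_sq_mul_add_le; [exact Hdefect |].
  pose proof (Rinv_pos_le_1 Q HQ).
  assert (0 <= t < 1) by (unfold t; lra).
  replace ((t ^ 2 * (/ Q - 1) - 2 * t ^ 3 / Q) / 2)
    with (t ^ 2 * (/ Q * (1 - 2 * t) - 1) / 2) by (field; lra).
  assert (-1 <= / Q * (1 - 2 * t) <= 1) by (split; nra).
  apply Rabs_le_between. split; nra.
Qed.

Lemma B0_sub_bound n x : (1 <= n)%nat -> 1 <= x <= INR n ->
  Rabs (B0 n x - 1/2 * INR n * x) <= 9 * x ^ 2.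
Proof.
  intros Hn Hx.
  destruct (q_bounds n x ltac:(lra)) as [Hq Hr].
  pose proof (harm_ln_defect_bound _ _ Hq Hr) as Hdefect.
  assert (HQ : 1 <= INR (q n x)) by (apply (le_INR 1); exact Hq).
  set (r := INR n / x) in *. set (Q := INR (q n x)) in *.
  assert (HN : INR n = r * x) by (unfold r; field; lra).
  set (t := r - Q).
  assert (E : B0 n x - 1/2 * INR n * x
              = x ^ 2 * (r ^ 2 * harm_ln_defect (q n x) r
                         + t * (1 - 2 * t) * (1 + t / Q) / 2)).
  { unfold B0, harm_ln_defect. cbv zeta. fold r Q. rewrite HN. unfold t. field. lra. }
  rewrite E. replace 9 with (8 + 1) by ring.
  apply Rabs_sq_mul_add_le; [exact Hdefect |].
  assert (0 <= t < 1) by (unfold t; lra).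
  assert (0 <= t / Q <= 1) by (split; [apply Rdiv_le_0_compat | apply Rle_div_l]; lra).
  assert (-1 <= t * (1 - 2 * t) <= 1) by (split; nra).
  apply Rabs_le_between. split; nra.
Qed.

Theorem theorem3p7 :
  (exists C : R, forall (n : nat) (x : R), (1 <= n)%nat -> 1 <= x <= INR n ->
      Rabs (A0 n x - INR n * x) <= C * x ^ 2) /\
  (exists C : R, forall (n : nat) (x : R), (1 <= n)%nat -> 1 <= x <= INR n ->
      Rabs (B0 n x - 1/2 * INR n * x) <= C * x ^ 2).
Proof.
  split; exists 9; [exact A0_sub_bound | exact B0_sub_bound].
Qed.
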